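(* Let $H$ be a Hilbert space over $\mathbb{F}\in\{\mathbb{R},\mathbb{C}\}$, $n\ge1$, and $S\subseteq H^n$. Suppose that for every $U\in S$ there exist $\Theta(U)\in St(n,H)\cap S$ and a polynomial path up to reparametrization $\gamma:[0,1]\to H^n$ with $\gamma(0)=U$, $\gamma(1)=\Theta(U)$ and $\gamma([0,1])\subseteq S$. Then $St(n,H)\cap S$ is dense in $S$.
   Context: $H^n$ carries the norm $\|(h_1,\dots,h_n)\|^2=\sum_{k=1}^n\|h_k\|^2$. $St(n,H)=\{(h_1,\dots,h_n)\in H^n:\ h_1,\dots,h_n \text{ linearly independent}\}$. A map $\gamma:[0,1]\to V$ into a vector space $V$ is a polynomial path up to reparametrization if there exist $q\in\mathbb{N}$, vectors $v^0,\dots,v^q\in V$, real numbers $a<b$ and a homeomorphism $\phi:[0,1]\to[a,b]$ such that $\gamma(\phi^{-1}(t))=\sum_{k=0}^q t^k v^k$ for all $t\in[a,b]$. *)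

From HB Require Import structures.
From mathcomp Require Import all_boot all_order all_algebra.
From mathcomp Require Import all_classical all_reals all_analysis.
From mathcomp Require Import complex.
Set Implicit Arguments. Unset Strict Implicit. Unset Printing Implicit Defensive.
Import Order.TTheory GRing.Theory Num.Theory numFieldNormedType.Exports.
Local Open Scope classical_set_scope.
Local Open Scope ring_scope.

(* Hilbert space over a number field K (used with K = R and K = R[i]):
   an inner product [ip], linear in the first argument, conjugate-symmetric
   w.r.t. [conj], positive definite, and complete for the induced norm
   ||x|| = sqrt (ip x x).  (We compare squared norms: ||x|| < e <-> ip x x < e^2.) *)
Definition hilbert_space (K : numFieldType) (V : lmodType K)
  (conj : K -> K) (ip : V -> V -> K) : Prop :=
  [/\ (forall (a : K) (x y z : V), ip (a *: x + y) z = a * ip x z + ip y z),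
      (forall x y : V, ip y x = conj (ip x y)),
      (forall x : V, 0 <= ip x x),
      (forall x : V, ip x x = 0 -> x = 0) &
      (forall u : nat -> V,
         (forall e : K, 0 < e -> exists N : nat, forall m k : nat,
              (N <= m)%N -> (N <= k)%N -> ip (u m - u k) (u m - u k) < e) ->
         exists l : V, forall e : K, 0 < e -> exists N : nat, forall k : nat,
              (N <= k)%N -> ip (u k - l) (u k - l) < e)].

Definition sqnormHn (K : numFieldType) (V : lmodType K) (ip : V -> V -> K)
  (n : nat) (U : 'I_n -> V) : K := \sum_(k < n) ip (U k) (U k).

Definition St (K : numFieldType) (V : lmodType K) (n : nat) : set ('I_n -> V) :=
  [set h | forall c : 'I_n -> K, \sum_(k < n) c k *: h k = 0 -> forall k, c k = 0].

Definition homeo_with_inverse (R : realType) (phi psi : R -> R) (a b : R) : Prop :=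
  [/\ {within `[0, 1]%classic, continuous phi},
      {within `[a, b]%classic, continuous psi},
      (forall s, s \in `[0, 1] -> phi s \in `[a, b] /\ psi (phi s) = s) &
      (forall t, t \in `[a, b] -> psi t \in `[0, 1] /\ phi (psi t) = t)].

(* gamma : [0,1] -> H^n is a polynomial path up to reparametrization; real
   scalars act on H through the embedding [emb : R -> K]. *)
Definition poly_path_reparam (R : realType) (K : numFieldType) (emb : R -> K)
  (V : lmodType K) (n : nat) (gamma : R -> 'I_n -> V) : Prop :=
  exists (q : nat) (v : 'I_q.+1 -> 'I_n -> V) (a b : R) (phi psi : R -> R),
    [/\ a < b, homeo_with_inverse phi psi a b &
        forall t, t \in `[a, b] -> forall j : 'I_n,
          gamma (psi t) j = \sum_(k < q.+1) (emb t) ^+ k *: v k j].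

Definition cor45_for (R : realType) (K : numFieldType) (conj : K -> K)
  (emb : R -> K) : Prop :=
  forall (V : lmodType K) (ip : V -> V -> K) (n : nat) (S : set ('I_n -> V)),
    hilbert_space conj ip -> (1 <= n)%N ->
    (forall U, S U -> exists Th : 'I_n -> V, (@St K V n Th /\ S Th) /\
       exists gamma : R -> 'I_n -> V, [/\ poly_path_reparam emb gamma,
          gamma 0 = U, gamma 1 = Th &
          forall t, t \in `[0, 1] -> S (gamma t)]) ->
    (forall U, S U -> forall e : K, 0 < e ->
       exists W, (@St K V n W /\ S W) /\ sqnormHn ip (fun k => U k - W k) < e).

From HB Require Import structures.
From mathcomp Require Import all_boot all_order all_algebra.
From mathcomp Require Import all_classical all_reals all_analysis.
From mathcomp Require Import complex.
From mathcomp Require Import lra.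
Import Order.TTheory GRing.Theory Num.Theory numFieldNormedType.Exports.
Local Open Scope classical_set_scope.
Local Open Scope ring_scope.
Set Implicit Arguments. Unset Strict Implicit.

(* After reparametrization the path is t |-> P(t) = sum_k t^k v_k for t in a
   real interval [a, b], with U = P(t0) and Theta(U) = P(t1).
   (1) Gram criterion: W is linearly independent iff det (gram W) != 0.
   (2) Since the parameter is real, conj fixes it, so det (gram P(t)) = D(t)
       for a polynomial D; D != 0 because P(t1) is independent.
   (3) Likewise ||U - P(t)||^2 = r(t) for a polynomial r with r(t0) = 0, so
       this distance is small for t close to t0.
   (4) A nonzero polynomial has finitely many roots, so arbitrarily close to
       t0 in [a, b] there is t with D(t) != 0; P(t) then lies in St ∩ S and
       close to U. *)

Section Sesquilinear.
Variables (K : numFieldType) (V : lmodType K) (conj : K -> K) (ip : V -> V -> K).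
Hypothesis ip_linl : forall (a : K) (x y z : V), ip (a *: x + y) z = a * ip x z + ip y z.
Hypothesis ip_sym : forall x y : V, ip y x = conj (ip x y).
Hypothesis conjD : forall x y, conj (x + y) = conj x + conj y.
Hypothesis conjM : forall x y, conj (x * y) = conj x * conj y.

Lemma ip0l z : ip 0 z = 0.
Proof.
apply: (@addrI _ (ip 0 z)); rewrite addr0.
by have := ip_linl 1 0 0 z; rewrite scale1r addr0 mul1r.
Qed.

Lemma ipZl a x z : ip (a *: x) z = a * ip x z.
Proof. by rewrite -[a *: x]addr0 ip_linl ip0l addr0. Qed.

Lemma ipDl x y z : ip (x + y) z = ip x z + ip y z.
Proof. by have := ip_linl 1 x y z; rewrite scale1r mul1r. Qed.

Lemma ip_suml m (c : 'I_m -> K) (x : 'I_m -> V) z :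
  ip (\sum_(i < m) c i *: x i) z = \sum_(i < m) c i * ip (x i) z.
Proof.
elim: m c x => [|m IH] c x; first by rewrite !big_ord0 ip0l.
by rewrite !big_ord_recr /= ipDl ipZl IH.
Qed.

Lemma conj0 : conj 0 = 0.
Proof. by apply: (@addrI _ (conj 0)); rewrite -conjD !addr0. Qed.

Lemma conjN x : conj (- x) = - conj x.
Proof. by apply/eqP; rewrite -subr_eq0 opprK -conjD addNr conj0. Qed.

Lemma conj_sum m (F : 'I_m -> K) : conj (\sum_(i < m) F i) = \sum_(i < m) conj (F i).
Proof.
elim: m F => [|m IH] F; first by rewrite !big_ord0 conj0.
by rewrite !big_ord_recr /= conjD IH.
Qed.

Lemma ip_sum2 m (a : 'I_m -> K) (x : 'I_m -> V) m' (b : 'I_m' -> K) (y : 'I_m' -> V) :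
  ip (\sum_(k < m) a k *: x k) (\sum_(l < m') b l *: y l) =
  \sum_(k < m) \sum_(l < m') a k * conj (b l) * ip (x k) (y l).
Proof.
rewrite ip_suml; apply: eq_bigr => k _.
rewrite ip_sym ip_suml conj_sum mulr_sumr; apply: eq_bigr => l _.
by rewrite conjM -ip_sym mulrA.
Qed.

Definition gram n (W : 'I_n -> V) : 'M[K]_n := \matrix_(i, j) ip (W i) (W j).

Lemma gram_mulmx n (W : 'I_n -> V) (c : 'rV[K]_n) j :
  (c *m gram W) 0 j = ip (\sum_(i < n) c 0 i *: W i) (W j).
Proof. by rewrite ip_suml !mxE; apply: eq_bigr => i _; rewrite mxE. Qed.

Hypothesis ip_definite : forall x : V, ip x x = 0 -> x = 0.

Lemma gram_St n (W : 'I_n -> V) : St W <-> \det (gram W) != 0.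
Proof.
split=> [indepW | detW c sum0 k].
  apply/negP => /det0P [c c0 cG].
  set w := \sum_(i < n) c 0 i *: W i.
  have w_orth j : ip w (W j) = 0 by rewrite -gram_mulmx cG mxE.
  have w0 : w = 0.
    apply: ip_definite; rewrite {2}/w ip_sym ip_suml big1 ?conj0 // => j _.
    by rewrite ip_sym w_orth conj0 mulr0.
  move/negP: c0; apply; apply/eqP/rowP => k.
  by rewrite mxE (indepW (fun i => c 0 i) w0 k).
pose cr : 'rV[K]_n := \row_k c k.
have [cr0|cr0] := eqVneq cr 0.
  by have := congr1 (fun M : 'rV[K]_n => M 0 k) cr0; rewrite !mxE.
move/negP: detW; case; apply/det0P; exists cr => //; apply/rowP => j.
rewrite gram_mulmx [in RHS]mxE (eq_bigr (fun i => c i *: W i)) ?sum0 ?ip0l // => i _.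
by rewrite mxE.
Qed.

End Sesquilinear.

Lemma sqnormHn_ge0 (K : numFieldType) (V : lmodType K) (ip : V -> V -> K) n
  (U : 'I_n -> V) : (forall x, 0 <= ip x x) -> 0 <= sqnormHn ip U.
Proof. by move=> ip_ge0; apply: sumr_ge0 => k _. Qed.

Lemma horner_cvg (R : realType) (K : numFieldType) (f : R -> K) (t0 : R)
  (p : {poly K}) :
  f x @[x --> t0] --> f t0 -> p.[f x] @[x --> t0] --> p.[f t0].
Proof.
move=> f_cvg; elim/poly_ind: p => [|p c IH].
  rewrite horner0; under eq_fun do rewrite horner0; exact: cvg_cst.
rewrite hornerMXaddC; under eq_fun do rewrite hornerMXaddC.
by apply: cvgD; [exact: cvgM | exact: cvg_cst].
Qed.

(* A nonzero polynomial does not vanish identically on (the injective image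
   of) a nondegenerate real interval: it has fewer than size p roots. *)
Lemma exists_nonroot (R : realType) (K : numFieldType) (emb : R -> K)
  (embI : injective emb) (p : {poly K}) (c d : R) :
  p != 0 -> c < d -> exists t, c <= t <= d /\ p.[emb t] != 0.
Proof.
move=> p0 cd; apply/not_existsP => allroot.
pose pt (m : nat) : R := c + (d - c) / m.+1%:R.
have dc0 : 0 < d - c by rewrite subr_gt0.
have pt_in m : c <= pt m <= d.
  have step_ge0 : 0 <= (d - c) / m.+1%:R by rewrite divr_ge0 ?ltW.
  have step_le : (d - c) / m.+1%:R <= d - c.
    by rewrite ler_pdivrMr ?ltr0Sn // ler_peMr ?(ltW dc0) // ler1n.
  by rewrite /pt; move: step_ge0 step_le; set s := _ / _ => ? ?; apply/andP; split; lra.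
have ptI : injective pt.
  move=> m1 m2 /addrI /(mulfI (lt0r_neq0 dc0)) /invr_inj /eqP.
  by rewrite eqr_nat eqSS => /eqP.
suff : (size p < size p)%N by rewrite ltnn.
rewrite -[X in (X < _)%N](size_iota 0) -(size_map (fun m => emb (pt m))).
apply: (max_poly_roots p0).
  apply/allP => x /mapP [m _ ->]; apply/negPn/negP => ptm.
  exact: (allroot (pt m)).
by rewrite map_inj_uniq ?iota_uniq // => m1 m2 /embI /ptI.
Qed.

Lemma nonroot_near (R : realType) (K : numFieldType) (emb : R -> K)
  (embI : injective emb) (p : {poly K}) (a b t0 d : R) :
  p != 0 -> a < b -> t0 \in `[a, b] -> 0 < d ->
  exists t, [/\ t \in `[a, b], `|t0 - t| < d & p.[emb t] != 0].
Proof.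
move=> p0 ab; rewrite in_itv /= => /andP [at0 t0b] d0.
pose c := Order.max a (t0 - d / 2); pose c' := Order.min b (t0 + d / 2).
have cc' : c < c' by rewrite gt_max !lt_min ab; apply/and3P; split; lra.
have [t [/andP [ct tc'] pt]] := exists_nonroot embI p0 cc'.
move: ct tc'; rewrite ge_max le_min => /andP [a_le_t lo_le_t] /andP [t_le_b t_le_hi].
by exists t; split; rewrite ?in_itv /= ?a_le_t ?t_le_b // ltr_norml; apply/andP; split; lra.
Qed.

Definition vpoly (K : numFieldType) (V : lmodType K) n q
  (v : 'I_q.+1 -> 'I_n -> V) (x : K) : 'I_n -> V :=
  fun j => \sum_(k < q.+1) x ^+ k *: v k j.

Lemma poly_path_trace (R : realType) (K : numFieldType) (emb : R -> K)
  (V : lmodType K) n (gamma : R -> 'I_n -> V) :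
  poly_path_reparam emb gamma ->
  exists q (v : 'I_q.+1 -> 'I_n -> V) (a b t0 t1 : R),
    [/\ a < b, t0 \in `[a, b], gamma 0 = vpoly v (emb t0),
        gamma 1 = vpoly v (emb t1) &
        forall t, t \in `[a, b] -> exists2 s, s \in `[0, 1] & gamma s = vpoly v (emb t)].
Proof.
move=> [q [v [a [b [phi [psi [ab [_ _ phiK psiK] gammaE]]]]]]].
have on_path t : t \in `[a, b] -> gamma (psi t) = vpoly v (emb t).
  by move=> tin; apply: funext => j; rewrite gammaE.
have in01 : forall s : R, s = 0 \/ s = 1 -> s \in `[0, 1].
  by move=> s [->|->]; rewrite in_itv /= lexx ler01.
have [t0in t0K] := phiK 0 (in01 0 (or_introl erefl)).
have [t1in t1K] := phiK 1 (in01 1 (or_intror erefl)).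
exists q, v, a, b, (phi 0), (phi 1); split => //.
- by rewrite -on_path // t0K.
- by rewrite -on_path // t1K.
- by move=> t tin; have [sin _] := psiK t tin; exists (psi t) => //; exact: on_path.
Qed.

Section PolynomialPaths.
Variables (R : realType) (K : numFieldType) (conj : K -> K) (emb : R -> K).
Variables (V : lmodType K) (ip : V -> V -> K).
Hypothesis ip_linl : forall (a : K) (x y z : V), ip (a *: x + y) z = a * ip x z + ip y z.
Hypothesis ip_sym : forall x y : V, ip y x = conj (ip x y).
Hypothesis conjD : forall x y, conj (x + y) = conj x + conj y.
Hypothesis conjM : forall x y, conj (x * y) = conj x * conj y.
Hypothesis conj1 : conj 1 = 1.
Hypothesis conj_emb : forall t, conj (emb t) = emb t.

Lemma conj_embX t k : conj (emb t ^+ k) = emb t ^+ k.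
Proof. by elim: k => [|k IH]; rewrite ?expr0 // !exprS conjM IH conj_emb. Qed.

(* Along real parameters the Gram determinant of a polynomial map is a
   polynomial, because conj fixes the real parameter. *)
Lemma gram_vpoly_det n q (v : 'I_q.+1 -> 'I_n -> V) :
  exists D : {poly K}, forall t, \det (gram ip (vpoly v (emb t))) = D.[emb t].
Proof.
pose M : 'M[{poly K}]_n := \matrix_(i, j) \sum_(k < q.+1) \sum_(l < q.+1)
    ip (v k i) (v l j) *: 'X^(k + l).
exists (\det M) => t.
suff -> : gram ip (vpoly v (emb t)) = map_mx (horner_eval (emb t)) M by rewrite det_map_mx.
apply/matrixP => i j; rewrite !mxE /vpoly (ip_sum2 ip_linl ip_sym conjD conjM).
rewrite horner_evalE horner_sum; apply: eq_bigr => k _.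
rewrite horner_sum; apply: eq_bigr => l _.
by rewrite hornerZ hornerXn conj_embX exprD mulrC.
Qed.

Lemma sqdist_vpoly n q (v : 'I_q.+1 -> 'I_n -> V) (t0 : R) :
  exists r : {poly K}, r.[emb t0] = 0 /\ forall t,
    sqnormHn ip (fun j => vpoly v (emb t0) j - vpoly v (emb t) j) = r.[emb t].
Proof.
pose x0 := emb t0.
pose r : {poly K} := \sum_(j < n) \sum_(k < q.+1) \sum_(l < q.+1)
   (((x0 ^+ k)%:P - 'X^k) * ((x0 ^+ l)%:P - 'X^l) * (ip (v k j) (v l j))%:P).
exists r; split.
  rewrite !horner_sum big1 // => j _; rewrite horner_sum big1 // => k _.
  by rewrite horner_sum big1 // => l _; rewrite !hornerE subrr !mul0r.
move=> t; rewrite /sqnormHn horner_sum; apply: eq_bigr => j _.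
have -> : vpoly v x0 j - vpoly v (emb t) j =
          \sum_(k < q.+1) (x0 ^+ k - emb t ^+ k) *: v k j.
  by rewrite /vpoly -sumrB; apply: eq_bigr => k _; rewrite scalerBl.
rewrite (ip_sum2 ip_linl ip_sym conjD conjM) horner_sum; apply: eq_bigr => k _.
rewrite horner_sum; apply: eq_bigr => l _.
by rewrite conjD (conjN conjD) !conj_embX !hornerE.
Qed.

End PolynomialPaths.

Lemma cor45_generic (R : realType) (K : numFieldType) (conj : K -> K) (emb : R -> K) :
  (forall x y, conj (x + y) = conj x + conj y) ->
  (forall x y, conj (x * y) = conj x * conj y) -> conj 1 = 1 ->
  (forall t, conj (emb t) = emb t) -> injective emb ->
  (forall t0, emb t @[t --> t0] --> emb t0) ->
  cor45_for conj emb.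
Proof.
move=> conjD conjM conj1 conj_emb embI emb_cvg V ip n S [ip_linl ip_sym ip_ge0 ip_def _] _.
move=> path_to_St U SU e e0.
have [Th [[StTh _] [gamma [gamma_path gamma0 gamma1 gammaS]]]] := path_to_St U SU.
have [q [v [a [b [t0 [t1 [ab t0in UE ThE gamma_onto]]]]]]] := poly_path_trace gamma_path.
rewrite gamma0 in UE; rewrite gamma1 in ThE.
have [D DE] := gram_vpoly_det ip_linl ip_sym conjD conjM conj1 conj_emb v.
have D0 : D != 0.
  apply: contraPneq StTh => D0.
  by rewrite ThE (gram_St ip_linl ip_sym conjD ip_def) DE D0 horner0 eqxx.
have [r [r_t0 rE]] := sqdist_vpoly ip_linl ip_sym conjD conjM conj1 conj_emb v t0.
have /cvgrPdist_lt/(_ e e0)/nbhs_normP [d /= d0 r_small] := horner_cvg (p := r) (emb_cvg t0).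
have [t [tin tt0 Dt]] := nonroot_near embI D0 ab t0in d0.
exists (vpoly v (emb t)); split; first split.
- by rewrite (gram_St ip_linl ip_sym conjD ip_def) DE.
- by have [s sin <-] := gamma_onto t tin; exact: gammaS.
- have := r_small t tt0; rewrite /= r_t0 sub0r normrN UE rE ger0_norm //.
  by rewrite -rE; exact: sqnormHn_ge0.
Qed.

(* The embedding of R into R[i] preserves the norm, hence is continuous. *)
Lemma normc_real (R : realType) (t : R) : `|(t%:C)%C : R[i]| = (`|t|%:C)%C.
Proof. by rewrite normc_def /= expr0n /= addr0 sqrtr_sqr. Qed.

Lemma real_complex_cvg (R : realType) (t0 : R) :
  ((t%:C)%C : (R[i] : numFieldType)) @[t --> t0] --> ((t0%:C)%C : (R[i] : numFieldType)).
Proof.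
apply/cvgrPdist_lt => eps; rewrite ltcE /= => /andP [/eqP eps_real eps0].
have -> : eps = ((complex.Re eps)%:C)%C by case: eps eps_real {eps0} => x y /= ->.
near=> t; rewrite -raddfB normc_real ltcR; near: t.
by move: (@cvg_id _ (nbhs t0)) => /cvgrPdist_lt; apply.
Unshelve. all: by end_near.
Qed.

Theorem corollary4p5 (R : realType) :
  @cor45_for R (R : numFieldType) id id /\
  @cor45_for R (R[i] : numFieldType) (fun z => (z^*)%C) (fun t => (t%:C)%C).
Proof.
split; first by apply: cor45_generic.
apply: cor45_generic.
- exact: raddfD.
- exact: rmorphM.
- exact: conjc1.
- exact: conjc_real.
- exact: complexI.
- exact: real_complex_cvg.
Qed.
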